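(* Let $g\in\mathbb{S}^{d-1}$ be fixed, let $k\ge1$, and let $(\lambda_i,u_i)\in\mathbb{R}\times\mathbb{S}^{d-1}$ for $i\in[k]$. Let $T\subseteq[k]$ and for even $\ell\ge 2$ define $$M_\ell=\sum_{i\in T}\lambda_i\langle u_i,g\rangle^{\ell-2}u_iu_i^\top\in\mathbb{R}^{d\times d}.$$ Let $\eta\ge0$ and let $\widehat M_\ell\in\mathbb{R}^{d\times d}$ satisfy $\|M_\ell-\widehat M_\ell\|_{\mathrm{op}}\le\eta$ for all $\ell\in\{2,4,\dots,2k,2k+2\}$. Let $V$ be the span of the top-$k$ singular vectors of all of $\widehat M_2,\widehat M_4,\dots,\widehat M_{2k+2}$. For $i\in T$ let $u_i'$ be the orthogonal projection of $u_i$ onto $V$ and $r_i=u_i-u_i'$. Let $C_1>0$, $C_2\ge0$. If for some $i\in T$ and some $\ell\in\{2,4,\dots,2k+2\}$ $$r_i^\top M_\ell r_i\ge C_1\langle r_i,u_i\rangle^2-C_2,$$ then, for $\upsilon=c\big((\eta/C_1)^{1/2}+(C_2/C_1)^{1/4}\big)$ with $c$ a suitable absolute constant, every $\upsilon$-net (in Euclidean distance) of the unit vectors of $V$ contains a vector within Euclidean distance $2\upsilon$ of $u_i$.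
   Context: A $\upsilon$-net of a set $X$ is a subset $\mathcal{S}\subseteq X$ such that every point of $X$ is within distance $\upsilon$ of some point of $\mathcal{S}$. *)

From HB Require Import structures.
From Stdlib Require Import Reals.
From mathcomp Require Import all_boot all_order all_algebra.
From mathcomp Require Import boolp classical_sets reals Rstruct.
Set Implicit Arguments. Unset Strict Implicit. Unset Printing Implicit Defensive.
Import Order.TTheory GRing.Theory Num.Theory.
Local Open Scope ring_scope.
Local Open Scope classical_set_scope.

Definition dotv (d : nat) (x y : 'rV[R]_d) : R := \sum_(j < d) x 0 j * y 0 j.
Definition vnorm (d : nat) (x : 'rV[R]_d) : R := Num.sqrt (dotv x x).

Definition unitv (d : nat) (x : 'rV[R]_d) : Prop := vnorm x = 1.

(* Operator (spectral) norm: sup over unit x of |A x| (x as a column vector,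
   A x = (x A^T)^T). *)
Definition opnorm (d : nat) (A : 'M[R]_d) : R :=
  sup [set vnorm (x *m A^T) | x in [set x : 'rV[R]_d | unitv x]].

Definition orthonormal (d n : nat) (w : 'I_n -> 'rV[R]_d) : Prop :=
  forall i j : 'I_n, dotv (w i) (w j) = (if i == j then 1 else 0).

(* A singular value decomposition  A = sum_j s_j y_j w_j^T  (column
   convention: A = \sum_j s_j (y_j)(w_j)^T), with orthonormal left singular
   vectors y, orthonormal right singular vectors w and singular values s
   nonnegative and sorted nonincreasingly.  *)
Definition is_svd (d : nat) (A : 'M[R]_d) (y w : 'I_d -> 'rV[R]_d)
    (s : 'I_d -> R) : Prop :=
  [/\ orthonormal y, orthonormal w,
      (forall j, 0 <= s j),
      (forall i j : 'I_d, (i <= j)%N -> s j <= s i) &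
      A = \sum_(j < d) s j *: ((y j)^T *m w j)].

Definition Mell (d k : nat) (lam : 'I_k -> R) (u : 'I_k -> 'rV[R]_d)
    (g : 'rV[R]_d) (T : {set 'I_k}) (l : nat) : 'M[R]_d :=
  \sum_(i in T) (lam i * dotv (u i) g ^+ (l - 2)) *: ((u i)^T *m u i).

Definition qform (d : nat) (A : 'M[R]_d) (x : 'rV[R]_d) : R := (x *m A *m x^T) 0 0.

Definition is_net (d : nat) (ups : R) (X S : set 'rV[R]_d) : Prop :=
  S `<=` X /\ forall x, X x -> exists2 s, S s & vnorm (x - s) <= ups.

(* Unit vectors of a subspace V (given as the row space of a matrix). *)
Definition unit_vectors_of (d m : nat) (V : 'M[R]_(m, d)) : set 'rV[R]_d :=
  [set x | (x <= V)%MS /\ unitv x].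

From Pilot Require Import Defs.
From HB Require Import structures.
From Stdlib Require Import Reals.
From mathcomp Require Import all_boot all_order all_algebra.
From mathcomp Require Import boolp classical_sets reals Rstruct.
From mathcomp Require Import lra.
Import Order.TTheory GRing.Theory Num.Theory.
Local Open Scope ring_scope.
Local Open Scope classical_set_scope.
Set Implicit Arguments. Unset Strict Implicit.

(* The residual r = u_i - u_i' is orthogonal to the top-k right singular
   vectors of every Mhat_l.  As M_l has rank at most k, Weyl's inequality bounds
   the (k+1)-st singular value of Mhat_l by eta, so r^T Mhat_l r <= eta |r|^2
   and r^T M_l r <= 2 eta |r|^2.  Since <r, u_i> = |r|^2, the hypothesis reads
   C1 |r|^4 - C2 <= 2 eta |r|^2, whence 2 |r|^2 <= (2 (sqrt (eta/C1) +
   (C2/C1)^(1/4)))^2.  Normalising u_i' gives a unit vector of V at distance at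
   most sqrt 2 |r| from u_i, and a net point within ups of it; c = 2 works. *)

Section Euclid.
Variable d : nat.
Implicit Types x y z : 'rV[R]_d.

Lemma dotvE x y : dotv x y = (x *m y^T) 0 0.
Proof. by rewrite /dotv !mxE; apply: eq_bigr => j _; rewrite mxE. Qed.

Lemma dotvC x y : dotv x y = dotv y x.
Proof. by rewrite /dotv; apply: eq_bigr => j _; rewrite mulrC. Qed.

Lemma dotvDl x y z : dotv (x + y) z = dotv x z + dotv y z.
Proof. by rewrite /dotv -big_split; apply: eq_bigr => j _; rewrite mxE mulrDl. Qed.

Lemma dotvZl a x y : dotv (a *: x) y = a * dotv x y.
Proof. by rewrite /dotv mulr_sumr; apply: eq_bigr => j _; rewrite mxE mulrA. Qed.

Lemma dotvNl x y : dotv (- x) y = - dotv x y.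
Proof. by rewrite -scaleN1r dotvZl mulN1r. Qed.

Lemma dotvBl x y z : dotv (x - y) z = dotv x z - dotv y z.
Proof. by rewrite dotvDl dotvNl. Qed.

Lemma dotvDr x y z : dotv x (y + z) = dotv x y + dotv x z.
Proof. by rewrite dotvC dotvDl !(dotvC x). Qed.

Lemma dotvZr a x y : dotv x (a *: y) = a * dotv x y.
Proof. by rewrite dotvC dotvZl dotvC. Qed.

Lemma dotvBr x y z : dotv x (y - z) = dotv x y - dotv x z.
Proof. by rewrite dotvC dotvBl !(dotvC x). Qed.

Lemma dotv0l x : dotv 0 x = 0.
Proof. by rewrite /dotv big1 // => j _; rewrite mxE mul0r. Qed.

Lemma dotv0r x : dotv x 0 = 0.
Proof. by rewrite dotvC dotv0l. Qed.

Lemma dotv_suml I (r : seq I) (P : pred I) (F : I -> 'rV[R]_d) y :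
  dotv (\sum_(i <- r | P i) F i) y = \sum_(i <- r | P i) dotv (F i) y.
Proof.
elim: r => [|a r IH]; first by rewrite !big_nil dotv0l.
by rewrite !big_cons; case: (P a); rewrite ?dotvDl IH.
Qed.

Lemma dotv_ge0 x : 0 <= dotv x x.
Proof. by apply: sumr_ge0 => j _; rewrite -expr2 sqr_ge0. Qed.

Lemma dotv_eq0 x : (dotv x x == 0) = (x == 0).
Proof.
apply/eqP/eqP => [x0|->]; last exact: dotv0l.
have sq_ge0 (l : 'I_d) : predT l -> 0 <= x 0 l * x 0 l by rewrite -expr2 sqr_ge0.
apply/rowP => j; have /eqP := @psumr_eq0P _ _ _ _ sq_ge0 x0 j isT.
by rewrite mxE mulf_eq0 orbb => /eqP.
Qed.

Lemma dotv_gt0 x : x != 0 -> 0 < dotv x x.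
Proof. by rewrite lt_def dotv_eq0 dotv_ge0 andbT. Qed.

Lemma dotv_CauchySchwarz x y : dotv x y ^+ 2 <= dotv x x * dotv y y.
Proof.
have [->|ny] := eqVneq y 0; first by rewrite !dotv0r expr0n mulr0.
have yp := dotv_gt0 ny.
pose t := dotv x y / dotv y y.
have ht : t * dotv y y = dotv x y by rewrite mulfVK // gt_eqF.
have := dotv_ge0 (x - t *: y).
rewrite dotvBl !dotvBr !dotvZl !dotvZr (dotvC y x); nra.
Qed.

Lemma vnorm_ge0 x : 0 <= vnorm x.
Proof. exact: sqrtr_ge0. Qed.

Lemma vnorm_sqr x : vnorm x ^+ 2 = dotv x x.
Proof. by rewrite sqr_sqrtr // dotv_ge0. Qed.

Lemma vnorm_gt0 x : x != 0 -> 0 < vnorm x.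
Proof. by move=> nx; rewrite sqrtr_gt0 dotv_gt0. Qed.

Lemma dotv_le_vnorm x y : dotv x y <= vnorm x * vnorm y.
Proof.
apply: le_trans (ler_norm _) _.
rewrite -ler_sqr ?nnegrE ?mulr_ge0 ?vnorm_ge0 //.
by rewrite exprMn !vnorm_sqr real_normK ?num_real // dotv_CauchySchwarz.
Qed.

Lemma vnormD x y : vnorm (x + y) <= vnorm x + vnorm y.
Proof.
rewrite -ler_sqr ?nnegrE ?addr_ge0 ?vnorm_ge0 //.
rewrite vnorm_sqr dotvDl !dotvDr sqrrD !vnorm_sqr (dotvC y x).
have := dotv_le_vnorm x y; lra.
Qed.

Lemma vnormZ a x : vnorm (a *: x) = `|a| * vnorm x.
Proof.
by rewrite /vnorm dotvZl dotvZr mulrA -expr2 sqrtrM ?sqr_ge0 // sqrtr_sqr.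
Qed.

Lemma vnormB x y : vnorm (x - y) = vnorm (y - x).
Proof. by rewrite -opprB -scaleN1r vnormZ normrN normr1 mul1r. Qed.

Lemma unitvP x : unitv x <-> dotv x x = 1.
Proof.
rewrite /unitv; split => [h|h]; last by rewrite /vnorm h sqrtr1.
by rewrite -vnorm_sqr h expr1n.
Qed.

Lemma unitv_normalize x : x != 0 -> unitv ((vnorm x)^-1 *: x).
Proof.
move=> nx; rewrite /unitv vnormZ ger0_norm ?invr_ge0 ?vnorm_ge0 //.
by rewrite mulVf // gt_eqF // vnorm_gt0.
Qed.

Lemma unitv_dim_gt0 x : unitv x -> (0 < d)%N.
Proof.
move/unitvP; rewrite lt0n; apply: contraPneq => d0; move: x; rewrite d0 => x.
by rewrite /dotv big_ord0 => /eqP; rewrite eq_sym oner_eq0.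
Qed.

Lemma parseval (w : 'I_d -> 'rV[R]_d) x :
  Defs.orthonormal w -> \sum_j dotv x (w j) ^+ 2 = dotv x x.
Proof.
move=> ow; pose B : 'M[R]_d := \matrix_(i, l) w i 0 l.
have BB : B^T *m B = 1%:M.
  apply: mulmx1C; apply/matrixP => i l; rewrite !mxE.
  rewrite (_ : (i == l)%:R = dotv (w i) (w l)); last by rewrite ow; case: eqP.
  by apply: eq_bigr => t _; rewrite !mxE.
have xB j : (x *m B^T) 0 j = dotv x (w j).
  by rewrite mxE; apply: eq_bigr => t _; rewrite !mxE.
transitivity (dotv (x *m B^T) (x *m B^T)).
  by apply: eq_bigr => j _; rewrite xB expr2.
by rewrite !dotvE trmx_mul trmxK mulmxA -(mulmxA x) BB mulmx1.
Qed.

End Euclid.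

Section OperatorNorm.
Variable d : nat.
Implicit Types (A : 'M[R]_d) (x : 'rV[R]_d).

Lemma opnorm_has_sup A (z : 'rV[R]_d) : unitv z ->
  has_sup [set vnorm (x *m A^T) | x in [set x : 'rV[R]_d | unitv x]].
Proof.
move=> z1; split; first by exists (vnorm (z *m A^T)), z.
exists (Num.sqrt (\sum_j dotv (row j A) (row j A))) => _ [y /unitvP y1 <-].
rewrite /vnorm ler_sqrt ?sumr_ge0 // => [|j _]; last exact: dotv_ge0.
apply: ler_sum => j _; rewrite -expr2.
have -> : (y *m A^T) 0 j = dotv y (row j A).
  by rewrite mxE; apply: eq_bigr => t _; rewrite !mxE.
by have := dotv_CauchySchwarz y (row j A); rewrite y1 mul1r.
Qed.

Lemma vnorm_mul_opnorm A x : vnorm (x *m A^T) <= opnorm A * vnorm x.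
Proof.
have [->|nx] := eqVneq x 0; first by rewrite mul0mx /vnorm !dotv0l sqrtr0 mulr0.
have xp := vnorm_gt0 nx; set z := (vnorm x)^-1 *: x.
have z1 : unitv z := unitv_normalize nx.
have := sup_upper_bound (opnorm_has_sup A z1) (ex_intro2 _ _ z z1 erefl).
rewrite -/(opnorm A) /z -scalemxAl vnormZ ger0_norm ?invr_ge0 ?vnorm_ge0 //.
by rewrite mulrC ler_pdivrMr.
Qed.

Lemma qformE A x : qform A x = dotv (x *m A^T) x.
Proof.
rewrite /qform dotvE; transitivity ((x *m A *m x^T)^T 0 0); first by rewrite [RHS]mxE.
by rewrite !trmx_mul trmxK mulmxA.
Qed.

Lemma qformD A B x : qform (A + B) x = qform A x + qform B x.
Proof. by rewrite /qform mulmxDr mulmxDl mxE. Qed.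

Lemma qform_le_opnorm A x : qform A x <= opnorm A * dotv x x.
Proof.
rewrite qformE -vnorm_sqr expr2 mulrA.
apply: le_trans (dotv_le_vnorm _ _) _.
by rewrite ler_wpM2r ?vnorm_ge0 ?vnorm_mul_opnorm.
Qed.

End OperatorNorm.

Lemma exists_kernel_vector_top d (M : 'M[R]_d) (W : 'I_d -> 'rV[R]_d) k
    (hk : (k < d)%N) :
  Defs.orthonormal W -> (\rank M <= k)%N ->
  exists x : 'rV[R]_d,
    [/\ x != 0, x *m M^T = 0 & forall l : 'I_d, (k < l)%N -> dotv x (W l) = 0].
Proof.
move=> oW rkM.
pose B : 'M[R]_(k.+1, d) := \matrix_(j, l) W (widen_ord hk j) 0 l.
pose b := nz_row (kermx (B *m M^T)).
have bBM : b *m (B *m M^T) = 0 by apply/sub_kermxP; exact: nz_row_sub.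
have nb : b != 0.
  rewrite nz_row_eq0 -mxrank_eq0 mxrank_ker subn_eq0 -ltnNge ltnS.
  by rewrite (leq_trans (mxrankM_maxr _ _)) ?mxrank_tr.
have xW l : dotv (b *m B) (W l) = \sum_j b 0 j * (widen_ord hk j == l)%:R.
  rewrite mulmx_sum_row dotv_suml; apply: eq_bigr => j _.
  rewrite dotvZl (_ : row j B = W (widen_ord hk j)); first by rewrite oW; case: eqP.
  by apply/rowP => t; rewrite !mxE.
exists (b *m B); split; last 2 first.
- by rewrite -mulmxA.
- move=> l kl; rewrite xW big1 // => j _.
  by rewrite -val_eqE /= ltn_eqF ?mulr0 // (leq_trans (ltn_ord j) kl).
apply: contra nb => /eqP x0; apply/eqP/rowP => j.
have := xW (widen_ord hk j); rewrite x0 dotv0l (bigD1 j) //= eqxx mulr1.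
rewrite big1 ?addr0 ?mxE // => j' nj'.
by rewrite -val_eqE /= val_eqE (negbTE nj') mulr0.
Qed.

Section SingularValueDecomposition.
Variables (d : nat) (Mh : 'M[R]_d) (Y W : 'I_d -> 'rV[R]_d) (s : 'I_d -> R).
Hypothesis svd : is_svd Mh Y W s.

Lemma mul_svd x : x *m Mh^T = \sum_j (s j * dotv x (W j)) *: Y j.
Proof.
case: svd => _ _ _ _ ->; rewrite linear_sum mulmx_sumr; apply: eq_bigr => j _.
rewrite linearZ /= -scalemxAr trmx_mul trmxK mulmxA [x *m _]mx11_scalar.
by rewrite mul_scalar_mx scalerA -dotvE.
Qed.

Lemma dotv_mul_svdY x l : dotv (x *m Mh^T) (Y l) = s l * dotv x (W l).
Proof.
case: svd => oY _ _ _ _; rewrite mul_svd dotv_suml (bigD1 l) //= big1.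
  by rewrite dotvZl oY eqxx mulr1 addr0.
by move=> j nj; rewrite dotvZl oY (negbTE nj) mulr0.
Qed.

Lemma dotv_mul_svd x :
  dotv (x *m Mh^T) (x *m Mh^T) = \sum_j (s j * dotv x (W j)) ^+ 2.
Proof.
case: svd => oY _ _ _ _; rewrite -(parseval _ oY).
by apply: eq_bigr => j _; rewrite dotv_mul_svdY.
Qed.

Lemma qform_svd_le r (K : 'I_d) :
  (forall j : 'I_d, (j < K)%N -> dotv r (W j) = 0) ->
  qform Mh r <= s K * dotv r r.
Proof.
move=> rW; case: svd => oY oW s0 smono _.
rewrite qformE mul_svd dotv_suml.
have -> : s K * dotv r r =
    \sum_j s K * ((dotv r (Y j) ^+ 2 + dotv r (W j) ^+ 2) / 2).
  by rewrite -mulr_sumr -mulr_suml big_split /= !parseval //; lra.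
(* termwise: s_j a b <= s_j (a^2 + b^2) / 2 <= s_K (a^2 + b^2) / 2 for K <= j *)
apply: ler_sum => j _; rewrite dotvZl (dotvC (Y j)).
set a := dotv r (Y j); set b := dotv r (W j).
have sK0 := s0 K; have sj0 := s0 j.
have [jK|Kj] := ltnP j K.
  by rewrite /b rW // mulr0 mul0r mulr_ge0 ?divr_ge0 ?addr_ge0 ?sqr_ge0.
have := smono K j Kj; have := sqr_ge0 (a - b); have := sqr_ge0 a; have := sqr_ge0 b.
nra.
Qed.

(* Weyl's inequality against a matrix of rank at most k. *)
Lemma svd_tail_le_opnorm (M : 'M[R]_d) k (hk : (k < d)%N) :
  (\rank M <= k)%N -> s (Ordinal hk) <= opnorm (M - Mh).
Proof.
move=> rkM; case: (svd) => _ oW s0 smono _.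
have [x [nx xM xW]] := exists_kernel_vector_top hk oW rkM.
set K := Ordinal hk.
have lower : s K ^+ 2 * dotv x x <= dotv (x *m Mh^T) (x *m Mh^T).
  rewrite dotv_mul_svd -(parseval x oW) mulr_sumr; apply: ler_sum => l _.
  rewrite exprMn; have [kl|lk] := ltnP k l; first by rewrite xW // expr0n /= !mulr0.
  rewrite ler_wpM2r ?sqr_ge0 //; have := smono l K lk; have := s0 K; nra.
have upper : vnorm (x *m Mh^T) <= opnorm (M - Mh) * vnorm x.
  have -> : x *m Mh^T = - (x *m (M - Mh)^T).
    by rewrite linearB /= mulmxBr xM sub0r opprK.
  by rewrite -scaleN1r vnormZ normrN normr1 mul1r vnorm_mul_opnorm.
rewrite -(ler_pM2r (vnorm_gt0 nx)); apply: le_trans upper.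
by rewrite -ler_sqr ?nnegrE ?mulr_ge0 ?vnorm_ge0 ?s0 // exprMn !vnorm_sqr.
Qed.

End SingularValueDecomposition.

Lemma qform_le_of_orth_top d (M Mh : 'M[R]_d) Y W s k eta r :
  (\rank M <= k)%N -> opnorm (M - Mh) <= eta -> is_svd Mh Y W s ->
  (forall j : 'I_d, (j < k)%N -> dotv r (W j) = 0) ->
  qform M r <= 2 * eta * dotv r r.
Proof.
move=> rkM hop svd rW.
have [hk|dk] := ltnP k d.
  have sk := le_trans (svd_tail_le_opnorm svd hk rkM) hop.
  have rho0 := dotv_ge0 r.
  rewrite -[M in qform M _](subrK Mh) qformD.
  have := qform_svd_le svd (K := Ordinal hk) rW.
  have := qform_le_opnorm (M - Mh) r.
  have := ler_wpM2r rho0 hop; have := ler_wpM2r rho0 sk; lra.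
have r0 : r = 0.
  case: svd => _ oW _ _ _; apply/eqP; rewrite -dotv_eq0 -(parseval r oW).
  by rewrite big1 // => j _; rewrite rW ?expr0n // (leq_trans (ltn_ord j) dk).
by rewrite r0 qformE mul0mx !dotv0l mulr0.
Qed.

Lemma sqrt_residual_le (F : rcfType) (C1 C2 eta rho : F) :
  0 < C1 -> 0 <= C2 -> 0 <= eta -> 0 <= rho ->
  C1 * rho ^+ 2 - C2 <= 2 * eta * rho ->
  Num.sqrt (2 * rho) <= 2 * (Num.sqrt (eta / C1) + Num.sqrt (Num.sqrt (C2 / C1))).
Proof.
move=> C1p C2p eta0 rho0 hrho.
set a := eta / C1; set b := C2 / C1.
have a0 : 0 <= a by rewrite divr_ge0 // ltW.
have b0 : 0 <= b by rewrite divr_ge0 // ltW.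
have rho_sqr : rho ^+ 2 <= 2 * a * rho + b.
  have ha : eta = a * C1 by rewrite divfK ?gt_eqF.
  have hb : C2 = b * C1 by rewrite divfK ?gt_eqF.
  have : C1 * (rho ^+ 2 - 2 * a * rho - b) <= 0 by move: hrho; rewrite ha hb; lra.
  by rewrite pmulr_rle0 //; lra.
set sb := Num.sqrt b; set A := Num.sqrt a; set B := Num.sqrt sb.
have sb0 : 0 <= sb := sqrtr_ge0 _.
have sb2 : sb ^+ 2 = b by rewrite sqr_sqrtr.
have rho_le : rho <= 2 * a + sb by nra.
have A0 : 0 <= A := sqrtr_ge0 _.
have B0 : 0 <= B := sqrtr_ge0 _.
have A2 : A ^+ 2 = a by rewrite sqr_sqrtr.
have B2 : B ^+ 2 = sb by rewrite sqr_sqrtr.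
rewrite -ler_sqr ?nnegrE ?sqrtr_ge0 ?mulr_ge0 ?addr_ge0 // sqr_sqrtr ?mulr_ge0 //.
nra.
Qed.

Lemma exists_unit_near d m (V : 'M[R]_(m, d)) u u' :
  unitv u -> (u' <= V)%MS -> (forall v, (v <= V)%MS -> dotv (u - u') v = 0) ->
  (exists w, unit_vectors_of V w) ->
  exists2 v, unit_vectors_of V v &
    vnorm (v - u) <= Num.sqrt (2 * dotv (u - u') (u - u')).
Proof.
move=> /unitvP u1 u'V rV [w [wV /unitvP w1]].
set r := u - u' in rV *; have ur : u = r + u' by rewrite /r subrK.
clearbody r.
have ru' := rV _ u'V; have rho0 := dotv_ge0 r.
have rho_nu : dotv r r + dotv u' u' = 1.
  by rewrite -u1 ur dotvDl !dotvDr (dotvC u' r) ru'; lra.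
suff [v [vV v1 vu]] : exists v, [/\ (v <= V)%MS, unitv v & 1 - dotv r r <= dotv v u].
  exists v => //; rewrite /vnorm ler_sqrt ?mulr_ge0 //.
  by rewrite dotvBl !dotvBr (dotvC u v) u1; move/unitvP: v1 => ->; lra.
have [u'0|nu'] := eqVneq u' 0.
  exists w; split => //; first exact/unitvP.
  rewrite ur dotvDr dotvC (rV _ wV) u'0 dotv0r.
  by move: rho_nu; rewrite u'0 dotv0l; lra.
exists ((vnorm u')^-1 *: u'); split; [exact: scalemx_sub | exact: unitv_normalize |].
have np := vnorm_gt0 nu'.
rewrite dotvZl ur dotvDr (dotvC u' r) ru' add0r -(vnorm_sqr u') expr2 mulKf ?gt_eqF //.
by move: rho_nu; rewrite -(vnorm_sqr u'); nra.
Qed.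

Lemma net_point_near d (X S : set 'rV[R]_d) ups x u :
  is_net ups X S -> X x -> vnorm (x - u) <= ups ->
  exists2 v, S v & vnorm (v - u) <= 2 * ups.
Proof.
move=> [_ hS] Xx xu; have [v Sv xv] := hS x Xx; exists v => //.
have -> : v - u = (v - x) + (x - u) by rewrite addrA subrK.
by apply: le_trans (vnormD _ _) _; rewrite vnormB; lra.
Qed.

Lemma Mell_factor d k (lam : 'I_k -> R) (u : 'I_k -> 'rV[R]_d) g T l :
  Mell lam u g T l =
  (\matrix_(t, j) u t 0 j)^T
    *m diag_mx (\row_t (if t \in T then lam t * dotv (u t) g ^+ (l - 2) else 0))
    *m (\matrix_(t, j) u t 0 j).
Proof.
apply/matrixP => a b; rewrite /Mell summxE mul_mx_diag !mxE big_mkcond /=.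
apply: eq_bigr => t _; rewrite !mxE.
case: (t \in T); last by rewrite mulr0 mul0r.
rewrite big_ord_recl big_ord0 addr0 !mxE (_ : ord0 = 0) //.
by rewrite mulrA [u t 0 a * _]mulrC.
Qed.

Lemma mxrank_Mell d k (lam : 'I_k -> R) (u : 'I_k -> 'rV[R]_d) g T l :
  (\rank (Mell lam u g T l) <= k)%N.
Proof.
by rewrite Mell_factor (leq_trans (mxrankM_maxr _ _)) ?rank_leq_row.
Qed.

Theorem lemma4p8 :
  exists c : R, 0 < c /\
  forall (d k : nat) (g : 'rV[R]_d) (lam : 'I_k -> R) (u : 'I_k -> 'rV[R]_d)
    (T : {set 'I_k}) (eta : R) (Mhat : 'I_k.+1 -> 'M[R]_d)
    (Y W : 'I_k.+1 -> 'I_d -> 'rV[R]_d) (s : 'I_k.+1 -> 'I_d -> R)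
    (i : 'I_k) (u' : 'rV[R]_d) (C1 C2 : R),
    (0 < k)%N ->
    unitv g ->
    (forall j, unitv (u j)) ->
    0 <= eta ->
    (* m indexes l = 2(m+1) in {2, 4, ..., 2k+2} *)
    (forall m : 'I_k.+1, opnorm (Mell lam u g T (m.+1).*2 - Mhat m) <= eta) ->
    (forall m : 'I_k.+1, is_svd (Mhat m) (Y m) (W m) (s m)) ->
    let V := (\sum_(m < k.+1) \sum_(j < d | (j < k)%N) <<W m j>>)%MS in
    i \in T ->
    (* u' is the orthogonal projection of u_i onto V *)
    (u' <= V)%MS -> (forall v, (v <= V)%MS -> dotv (u i - u') v = 0) ->
    let r := u i - u' in
    0 < C1 -> 0 <= C2 ->
    (exists m : 'I_k.+1,
        qform (Mell lam u g T (m.+1).*2) r >= C1 * dotv r (u i) ^+ 2 - C2) ->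
    let ups := c * (Num.sqrt (eta / C1) + Num.sqrt (Num.sqrt (C2 / C1))) in
    forall S : set 'rV[R]_d, is_net ups (unit_vectors_of V) S ->
    exists2 v, S v & vnorm (v - u i) <= 2 * ups.
Proof.
exists 2; split => // d k g lam u T eta Mhat Y W s i u' C1 C2 k0 _ u1 eta0 hop
  hsvd V _ u'V rV r C1p C2p [m hm] ups S hnet.
have WV (j : 'I_d) : (j < k)%N -> (W m j <= V)%MS.
  by move=> jk; apply: (sumsmx_sup m) => //; apply: (sumsmx_sup j); rewrite ?genmxE.
have rW (j : 'I_d) : (j < k)%N -> dotv r (W m j) = 0 by move=> /WV; apply: rV.
have hQ := qform_le_of_orth_top (mxrank_Mell lam u g T _) (hop m) (hsvd m) rW.
have ru : dotv r (u i) = dotv r r.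
  by rewrite -[u i in LHS](subrK u') dotvDr (rV _ u'V) addr0.
have unit_in_V : exists w, unit_vectors_of V w.
  pose j0 := Ordinal (unitv_dim_gt0 (u1 i)).
  case: (hsvd m) => _ oW _ _ _.
  by exists (W m j0); split; [exact: WV | apply/unitvP; rewrite oW eqxx].
have [v Vv vu] := exists_unit_near (u1 i) u'V rV unit_in_V.
have hres : Num.sqrt (2 * dotv r r) <= ups.
  apply: sqrt_residual_le => //; first exact: dotv_ge0.
  by apply: le_trans hQ; rewrite -ru.
exact: net_point_near hnet Vv (le_trans vu hres).
Qed.
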